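(* Let $0<m<L$ and $0<\alpha<2/(L+m)$. If $\delta\in[0,1)$ and \[ \rho \geq \left( 1-\frac{2 \alpha L m}{L+m} + \frac{\alpha \delta^2 (L + m -2 \alpha Lm )}{2- \alpha (L+m)}\right)^{1/2}, \] then there exists $c>0$ such that for every $f \in \mathcal{S}(m,L)$ (with reference point $x_\star$), every sequence $x(k)\in\mathbb{R}^n$ and every error sequence $e(k)\in\mathbb{R}^n$ satisfying, for all $k\ge 0$, \[ x(k+1) = x(k) - \alpha\big(\nabla f(x(k)) + e(k)\big), \qquad |e(k)| \leq \delta\, |\nabla f(x(k))|, \] we have $|x(k)-x_\star| \leq c\, \rho^k\, |x(0)-x_\star|$ for all $k \geq 0$.
   Context: For $0\le m<L$, $\mathcal{S}(m,L)$ denotes the set of $C^1$ functions $f:\mathbb{R}^n\to\mathbb{R}$ for which there is a reference point $x_\star\in\mathbb{R}^n$ such that for every $x\in\mathbb{R}^n$, $\langle m(x-x_\star) - \nabla f(x),\ L(x-x_\star) - \nabla f(x)\rangle \le 0$. The constant $c$ may depend on $m,L,\alpha,\delta,\rho$ but not on $f$, $x$ or $e$. *)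

From HB Require Import structures.
From mathcomp Require Import all_boot all_order all_algebra.
From mathcomp Require Import all_classical all_reals all_analysis.
Set Implicit Arguments. Unset Strict Implicit. Unset Printing Implicit Defensive.
Import Order.TTheory GRing.Theory Num.Theory.
Import numFieldNormedType.Exports.
Local Open Scope ring_scope.

(* Euclidean inner product and Euclidean norm on R^n = 'rV[R]_n.
   (The library's norm on 'rV_n is the sup norm, so we define |.| here.) *)
Definition dotv (R : realType) (n : nat) (u v : 'rV[R]_n) : R :=
  \sum_(i < n) u ord0 i * v ord0 i.

Definition enorm (R : realType) (n : nat) (u : 'rV[R]_n) : R :=
  Num.sqrt (dotv u u).

Definition C1_with_gradient (R : realType) (n : nat)
    (f : 'rV[R]_n -> R) (grad : 'rV[R]_n -> 'rV[R]_n) : Prop :=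
  (forall x, differentiable f x /\ forall h, 'd f x h = dotv (grad x) h)
  /\ continuous grad.

Definition in_S (R : realType) (n : nat) (m L : R)
    (f : 'rV[R]_n -> R) (grad : 'rV[R]_n -> 'rV[R]_n) (xs : 'rV[R]_n) : Prop :=
  C1_with_gradient f grad /\
  forall x, dotv (m *: (x - xs) - grad x) (L *: (x - xs) - grad x) <= 0.

(** The sector condition defining S(m, L) says that at every point the gradient
    step shrinks |x - x*|^2 by the factor 1 - 2 alpha L m / (L + m), with a
    spare term alpha (2 - alpha (L + m)) / (L + m) |grad f(x)|^2. The inexact step
    differs from the exact one by alpha e with |e| <= delta |grad f(x)|, and the
    Peter-Paul inequality |u + v|^2 <= (1 + t) |u|^2 + (1 + 1/t) |v|^2, with t
    chosen so that the error term is absorbed by the spare term, gives the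
    one-step contraction |x(k+1) - x*|^2 <= rho^2 |x(k) - x*|^2; so c = 1. *)

From HB Require Import structures.
From mathcomp Require Import all_boot all_order all_algebra.
From mathcomp Require Import all_classical all_reals all_analysis.
From mathcomp Require Import ring lra.
Import Order.TTheory GRing.Theory Num.Theory.
Import numFieldNormedType.Exports.
Local Open Scope ring_scope.

Section EuclideanInnerProduct.
Context {R : realType} {n : nat}.
Implicit Types (a : R) (u v w : 'rV[R]_n).

Lemma dotvC u v : dotv u v = dotv v u.
Proof. by apply: eq_bigr => i _; rewrite mulrC. Qed.

Lemma dotvDl u v w : dotv (u + v) w = dotv u w + dotv v w.
Proof. by rewrite /dotv -big_split; apply: eq_bigr => i _; rewrite !mxE mulrDl. Qed.

Lemma dotvZl a u w : dotv (a *: u) w = a * dotv u w.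
Proof. by rewrite /dotv mulr_sumr; apply: eq_bigr => i _; rewrite !mxE mulrA. Qed.

Lemma dotvNl u w : dotv (- u) w = - dotv u w.
Proof. by rewrite -scaleN1r dotvZl mulN1r. Qed.

Lemma dotvDr u v w : dotv w (u + v) = dotv w u + dotv w v.
Proof. by rewrite dotvC dotvDl !(dotvC w). Qed.

Lemma dotvZr a u w : dotv w (a *: u) = a * dotv w u.
Proof. by rewrite dotvC dotvZl dotvC. Qed.

Lemma dotvNr u w : dotv w (- u) = - dotv w u.
Proof. by rewrite dotvC dotvNl dotvC. Qed.

Definition dotvE :=
  (dotvDl, dotvDr, dotvZl, dotvZr, dotvNl, dotvNr).

Lemma dotvv_ge0 u : 0 <= dotv u u.
Proof. by apply: sumr_ge0 => i _; rewrite -expr2 sqr_ge0. Qed.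

Lemma dotvv_eq0 u : dotv u u = 0 -> u = 0.
Proof.
move=> /eqP; rewrite psumr_eq0 => [/allP u0|i _]; last by rewrite -expr2 sqr_ge0.
apply/rowP => i; have /implyP := u0 i (mem_index_enum _).
by rewrite mulf_eq0 orbb mxE => /(_ isT) /eqP.
Qed.

Lemma enorm_ge0 u : 0 <= enorm u.
Proof. exact: sqrtr_ge0. Qed.

Lemma enorm_sqr u : enorm u ^+ 2 = dotv u u.
Proof. by rewrite sqr_sqrtr // dotvv_ge0. Qed.

Lemma enorm_le_sqr u v (r : R) :
  0 <= r -> enorm u ^+ 2 <= r ^+ 2 * enorm v ^+ 2 -> enorm u <= r * enorm v.
Proof.
move=> r0; rewrite -exprMn ler_pXn2r // nnegrE ?enorm_ge0 //.
by rewrite mulr_ge0 ?enorm_ge0.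
Qed.

Lemma enormD_sqr_le u v (t b : R) :
  0 <= t -> 0 <= b -> enorm v ^+ 2 <= t * b ->
  enorm (u + v) ^+ 2 <= (1 + t) * (enorm u ^+ 2 + b).
Proof.
rewrite !enorm_sqr !dotvE (dotvC v u) le_eqVlt => t0 b0 vb.
suff cross : 2 * dotv u v <= t * dotv u u + b by nra.
case/orP: t0 => [/eqP t0 | t0].
  suff -> : v = 0.
    by rewrite -t0 mul0r add0r /dotv big1 ?mulr0 // => i _; rewrite mxE mulr0.
  by apply: dotvv_eq0; apply/eqP; rewrite eq_le dotvv_ge0 andbT -t0 mul0r in vb *.
have := dotvv_ge0 (t *: u - v); rewrite !dotvE (dotvC v u) => tuv.
rewrite -subr_ge0 -(pmulr_rge0 _ t0); nra.
Qed.

End EuclideanInnerProduct.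

Section InexactGradientStep.
Context {R : realType} {n : nat}.
Variables (m L alpha delta : R).
Implicit Types y g e : 'rV[R]_n.

Definition inexact_gd_factor : R :=
  1 - 2 * alpha * L * m / (L + m)
  + alpha * delta ^+ 2 * (L + m - 2 * alpha * L * m) / (2 - alpha * (L + m)).

Lemma sector_gradient_step y g :
  0 < L + m -> 0 <= alpha -> dotv (m *: y - g) (L *: y - g) <= 0 ->
  enorm (y - alpha *: g) ^+ 2
    + alpha * (2 - alpha * (L + m)) / (L + m) * enorm g ^+ 2
  <= (1 - 2 * alpha * L * m / (L + m)) * enorm y ^+ 2.
Proof.
move=> Lm_gt0 alpha_ge0; rewrite !enorm_sqr !dotvE (dotvC g y).
move: (dotv y y) (dotv y g) (dotv g g) => a p c sector.
have -> : (1 - 2 * alpha * L * m / (L + m)) * a =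
    a - 2 * alpha * p + alpha * alpha * c
    + alpha * (2 - alpha * (L + m)) / (L + m) * c
    - 2 * alpha / (L + m) * (m * L * a - (L + m) * p + c).
  by field; rewrite gt_eqF.
have : 0 <= 2 * alpha / (L + m) * - (m * L * a - (L + m) * p + c).
  by rewrite mulr_ge0 ?divr_ge0 //; lra.
lra.
Qed.

Lemma inexact_gradient_step y g e :
  0 < L + m -> 0 < alpha -> alpha * (L + m) < 2 -> 0 <= delta ->
  dotv (m *: y - g) (L *: y - g) <= 0 -> enorm e <= delta * enorm g ->
  enorm (y - alpha *: (g + e)) ^+ 2 <= inexact_gd_factor * enorm y ^+ 2.
Proof.
move=> Lm_gt0 alpha_gt0 alpha_lt delta_ge0 sector err.
have alpha_ge0 := ltW alpha_gt0.
set s := 2 - alpha * (L + m); have s_gt0 : 0 < s by rewrite subr_gt0.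
(* t is chosen so that t * b = (alpha * delta * |g|)^2: the error is absorbed by the spare term b of the exact step *)
set t := alpha * delta ^+ 2 * (L + m) / s.
set b := alpha * s / (L + m) * enorm g ^+ 2.
have t_ge0 : 0 <= t by rewrite divr_ge0 ?mulr_ge0 ?sqr_ge0 // ltW.
have b_ge0 : 0 <= b by rewrite mulr_ge0 ?divr_ge0 ?mulr_ge0 ?enorm_ge0 // ltW.
have err_le : enorm (- (alpha *: e)) ^+ 2 <= t * b.
  have -> : t * b = (alpha * (delta * enorm g)) ^+ 2.
    by rewrite /t /b; field; rewrite !gt_eqF.
  rewrite !enorm_sqr !dotvE -!enorm_sqr mulrN opprK [alpha * (alpha * _)]mulrA -expr2 -exprMn.
  rewrite ler_pXn2r ?nnegrE ?mulr_ge0 ?enorm_ge0 //.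
  exact: ler_wpM2l err.
rewrite scalerDr opprD addrA.
apply: le_trans (enormD_sqr_le _ _ _ _ t_ge0 b_ge0 err_le) _.
have -> : inexact_gd_factor * enorm y ^+ 2 =
    (1 + t) * ((1 - 2 * alpha * L * m / (L + m)) * enorm y ^+ 2).
  by rewrite /inexact_gd_factor /t /s; field; rewrite !gt_eqF.
apply: ler_wpM2l; first lra.
exact: sector_gradient_step.
Qed.

End InexactGradientStep.

Lemma geometric_bound (R : numDomainType) (r : R) (a : nat -> R) :
  0 <= r -> (forall k, a k.+1 <= r * a k) -> forall k, a k <= r ^+ k * a 0%N.
Proof.
move=> r_ge0 step; elim=> [|k IH]; first by rewrite expr0 mul1r.
by apply: le_trans (step k) _; rewrite exprS -mulrA ler_wpM2l.
Qed.

Theorem proposition1p2 (R : realType) (n : nat) (m L alpha delta rho : R) :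
  0 < m -> m < L -> 0 < alpha -> alpha < 2 / (L + m) ->
  0 <= delta -> delta < 1 ->
  Num.sqrt (1 - 2 * alpha * L * m / (L + m)
            + alpha * delta ^+ 2 * (L + m - 2 * alpha * L * m)
              / (2 - alpha * (L + m))) <= rho ->
  exists c : R, 0 < c /\
    forall (f : 'rV[R]_n -> R) (grad : 'rV[R]_n -> 'rV[R]_n) (xs : 'rV[R]_n)
           (x e : nat -> 'rV[R]_n),
      in_S m L f grad xs ->
      (forall k, x k.+1 = x k - alpha *: (grad (x k) + e k)) ->
      (forall k, enorm (e k) <= delta * enorm (grad (x k))) ->
      forall k, enorm (x k - xs) <= c * rho ^+ k * enorm (x 0%N - xs).
Proof.
move=> m_gt0 m_lt_L alpha_gt0 alpha_lt delta_ge0 _ sqrt_le_rho.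
have Lm_gt0 : 0 < L + m by lra.
have alphaLm_lt2 : alpha * (L + m) < 2 by rewrite -ltr_pdivlMr.
have rho_ge0 : 0 <= rho := le_trans (sqrtr_ge0 _) sqrt_le_rho.
have factor_le : inexact_gd_factor m L alpha delta <= rho ^+ 2.
  by rewrite -(ler_sqrt _ (sqr_ge0 rho)) sqrtr_sqr ger0_norm.
exists 1; split => // f grad xs x e [_ sector] step err k.
rewrite mul1r; apply: (@geometric_bound _ rho (fun k => enorm (x k - xs))) => // {}k.
apply: enorm_le_sqr => //.
have -> : x k.+1 - xs = x k - xs - alpha *: (grad (x k) + e k) by rewrite step addrAC.
apply: le_trans _ (ler_wpM2r (sqr_ge0 _) factor_le).
exact: inexact_gradient_step.
Qed.
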